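(* Let $F=(f_a)_{a\in D}$ be a planar analytic function on a region $D\subseteq\mathbb C$ and let $T\in\mathbb P$. Then the function $h_T:D\to\mathbb C$, $h_T(a)=\langle f_a,(x-a)^T\rangle$, is holomorphic on $D$.
   Context: Let $\mathbb P$ denote the set of finite planar reduced rooted trees (children of each vertex linearly ordered, no vertex with exactly one child), including the empty tree $\mathbf 1$ and the one-vertex tree $|$; $\deg(T)$ is the number of leaves, $L(T)$ the set of leaves. The algebra $\mathbb C\{x\}_{\mathbb P}$ has basis $\{x^T\}$, $x^{\mathbf 1}=1$, $x^|=x$, with $k$-linear operations $\omega_k$ ($k\ge2$), $\omega_k(x^{T_1},\dots,x^{T_k})=x^T$ where $T$ is obtained by attaching the nonempty $T_i$ in order as subtrees of the children of a new root (if exactly one is nonempty, $T$ is that one; if none, $T=\mathbf 1$); $y^T$ denotes the iteration along $T$ starting from $y$, e.g. $(x-a)^T$. $\mathbb C\{\{x-a\}\}_{\mathbb P}$ is the space of formal series $\sum_T\gamma_T(x-a)^T$ with coefficients $\langle f,(x-a)^T\rangle$. Radius of convergence: $\operatorname{rad}(\sum_T\gamma_T(x-a)^T)=\sup\{\rho\ge0:\sum_T|\gamma_T|\rho^{\deg T}<\infty\}$. Contraction $S|I$ for $I\subseteq L(S)$: the tree obtained from the subtree of $S$ spanned by the root-to-leaf paths to leaves in $I$ by suppressing all vertices with exactly one child; $(S/T)=\#\{I\subseteq L(S):S|I=T\}$. If $|b-a|<\operatorname{rad}(f)$, the expansion of $f\in\mathbb C\{\{x-a\}\}_{\mathbb P}$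 around $b$ is $\sum_T\gamma_T(b)(x-b)^T$ with $\gamma_T(b)=\sum_{U}\langle f,(x-a)^U\rangle(U/T)(b-a)^{\deg U-\deg T}$. A planar analytic function on a region $D$ is a family $F=(f_a)_{a\in D}$ with $f_a\in\mathbb C\{\{x-a\}\}_{\mathbb P}$, $\operatorname{rad}(f_a)>0$, such that whenever $a,b\in D$ and $\operatorname{rad}(f_a)>|b-a|$, the expansion of $f_a$ around $b$ equals $f_b$. *)

From Stdlib Require Import Reals List Arith.
From Coquelicot Require Import Coquelicot.
Import ListNotations.
Open Scope R_scope.

(** A tree in the paper's sense
    (element of P) is [None] (the empty tree 1) or [Some t] with [t] reduced. *)
Inductive ptree : Type :=
| Lf : ptree
| Nd : list ptree -> ptree.

Definition tree := option ptree.

Fixpoint nleaves (t : ptree) : nat :=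
  match t with
  | Lf => 1%nat
  | Nd l => (fix go (l : list ptree) : nat :=
               match l with nil => 0%nat | c :: l' => (nleaves c + go l')%nat end) l
  end.

Definition deg (T : tree) : nat :=
  match T with None => 0%nat | Some t => nleaves t end.

Fixpoint reduced (t : ptree) : Prop :=
  match t with
  | Lf => True
  | Nd l => (2 <= length l)%nat /\
            (fix go (l : list ptree) : Prop :=
               match l with nil => True | c :: l' => reduced c /\ go l' end) l
  end.

Definition isP (T : tree) : Prop :=
  match T with None => True | Some t => reduced t end.

Fixpoint ptree_eqb (s t : ptree) : bool :=
  match s, t with
  | Lf, Lf => true
  | Nd l1, Nd l2 =>
      (fix go (l1 l2 : list ptree) : bool :=
         match l1, l2 with
         | nil, nil => true
         | c1 :: r1, c2 :: r2 => andb (ptree_eqb c1 c2) (go r1 r2)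
         | _, _ => false
         end) l1 l2
  | _, _ => false
  end.

Definition tree_eqb (S T : tree) : bool :=
  match S, T with
  | None, None => true
  | Some s, Some t => ptree_eqb s t
  | _, _ => false
  end.

(** A subset I of the leaves of a tree with n leaves is a mask
    [m : list bool] of length n (leaves numbered left to right).  [restr t m]
    is the tree spanned by the root-to-leaf paths to the selected leaves, with
    all vertices having exactly one child suppressed; [None] = empty tree. *)
Fixpoint restr (t : ptree) (m : list bool) : option ptree :=
  match t with
  | Lf => match m with true :: _ => Some Lf | _ => None end
  | Nd l =>
      let cs :=
        (fix go (l : list ptree) (m : list bool) : list ptree :=
           match l with
           | nil => nil
           | c :: l' =>
               let k := nleaves c in
               match restr c (firstn k m) with
               | Some c' => c' :: go l' (skipn k m)
               | None => go l' (skipn k m)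
               end
           end) l m in
      match cs with
      | nil => None
      | c :: nil => Some c
      | _ => Some (Nd cs)
      end
  end.

Definition contract (S : tree) (m : list bool) : tree :=
  match S with None => None | Some s => restr s m end.

Fixpoint masks (n : nat) : list (list bool) :=
  match n with
  | O => [nil]
  | S n' => map (cons true) (masks n') ++ map (cons false) (masks n')
  end.

Definition ncontr (S T : tree) : nat :=
  length (filter (fun m => tree_eqb (contract S m) T) (masks (deg S))).

(** Formal planar series sum_T gamma_T (x-a)^T, given by coefficient function
    (only the values on trees in P are relevant). *)
Definition pseries := tree -> C.

Fixpoint Cpow (z : C) (n : nat) : C :=
  match n with O => RtoC 1 | S n' => Cmult z (Cpow z n') end.

Definition sumR (L : list tree) (g : tree -> R) : R := fold_right (fun T s => g T + s) 0 L.
Definition sumC (L : list tree) (g : tree -> C) : C :=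
  fold_right (fun T s => Cplus (g T) s) (RtoC 0) L.

Definition finset_P (L : list tree) : Prop := NoDup L /\ List.Forall isP L.

Definition abs_summable (g : tree -> R) : Prop :=
  exists M : R, forall L, finset_P L -> sumR L (fun T => Rabs (g T)) <= M.

Definition has_sum (g : tree -> C) (s : C) : Prop :=
  forall eps : R, 0 < eps ->
    exists L0, finset_P L0 /\
      forall L, finset_P L -> incl L0 L -> Cmod (Cminus (sumC L g) s) < eps.

Definition rad (f : pseries) : Rbar :=
  Lub_Rbar (fun rho => 0 <= rho /\ abs_summable (fun T => Cmod (f T) * rho ^ deg T)).

(* gamma_T(b) = sum_U <f,(x-a)^U> (U/T) (b-a)^(deg U - deg T) is the coefficient
   of (x-b)^T in the expansion of f (a series around a) around b. *)
Definition expansion_coef_is (f : pseries) (a b : C) (T : tree) (c : C) : Prop :=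
  has_sum (fun U => Cmult (Cmult (f U) (RtoC (INR (ncontr U T))))
                          (Cpow (Cminus b a) (deg U - deg T))) c.

Definition region (D : C -> Prop) : Prop :=
  (exists z, D z) /\ @open C_UniformSpace D /\
  (forall U V : C -> Prop, @open C_UniformSpace U -> @open C_UniformSpace V ->
     (forall z, D z -> U z \/ V z) ->
     (forall z, D z -> U z -> V z -> False) ->
     (exists z, D z /\ U z) -> (exists z, D z /\ V z) -> False).

Definition planar_analytic (D : C -> Prop) (F : C -> pseries) : Prop :=
  (forall a, D a -> Rbar_lt (Finite 0) (rad (F a))) /\
  (forall a b, D a -> D b -> Rbar_lt (Finite (Cmod (Cminus b a))) (rad (F a)) ->
     forall T, isP T -> expansion_coef_is (F a) a b T (F b T)).

Definition holomorphic_on (D : C -> Prop) (h : C -> C) : Prop :=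
  forall a, D a -> @ex_derive C_AbsRing C_NormedModule h a.

(* Near a, h_T(b) is the sum of the family
   f_a(U) (U/T) (b - a)^(deg U - deg T), and since (U/T) <= 2^(deg U) this family
   is absolutely summable for |b - a| <= r with r < rad(f_a)/2.  For such a
   generalized power series the difference quotients at a are again sums of
   the same kind, and any two of them differ by at most K (|y - a| + |y' - a|);
   hence they form a Cauchy family as y -> a, and its limit is h_T'(a). *)

From Stdlib Require Import Reals List Lra Lia Classical ClassicalEpsilon.
From Coquelicot Require Import Coquelicot.
Open Scope R_scope.

Lemma sumR_le (L : list tree) (g1 g2 : tree -> R) :
  (forall T, g1 T <= g2 T) -> sumR L g1 <= sumR L g2.
Proof. intros H. induction L; simpl; [lra|]. specialize (H a); lra. Qed.

Lemma sumR_scal (L : list tree) (k : R) (g : tree -> R) :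
  sumR L (fun T => k * g T) = k * sumR L g.
Proof. induction L; simpl; [|rewrite IHL]; ring. Qed.

Lemma sumR_bound_ge0 (g : tree -> R) (M : R) :
  (forall L, finset_P L -> sumR L g <= M) -> 0 <= M.
Proof. intros H. apply (H nil). split; constructor. Qed.

Lemma sumC_ext (L : list tree) (g1 g2 : tree -> C) :
  (forall T, g1 T = g2 T) -> sumC L g1 = sumC L g2.
Proof. intros H. induction L; simpl; [|rewrite IHL, H]; reflexivity. Qed.

Lemma sumC_minus (L : list tree) (g1 g2 : tree -> C) :
  sumC L (fun T => g1 T - g2 T)%C = (sumC L g1 - sumC L g2)%C.
Proof. induction L; simpl; [|rewrite IHL]; ring. Qed.

Lemma sumC_mult_r (L : list tree) (g : tree -> C) (k : C) :
  sumC L (fun T => g T * k)%C = (sumC L g * k)%C.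
Proof. induction L; simpl; [|rewrite IHL]; ring. Qed.

Lemma Cmod_sumC (L : list tree) (g : tree -> C) :
  Cmod (sumC L g) <= sumR L (fun T => Cmod (g T)).
Proof.
  induction L; simpl.
  - rewrite Cmod_0; lra.
  - eapply Rle_trans; [apply Cmod_triangle | lra].
Qed.

Lemma Cmod_minus_le (x y : C) : Cmod (x - y)%C <= Cmod x + Cmod y.
Proof.
  eapply Rle_trans; [apply Cmod_triangle|]. rewrite Cmod_opp; lra.
Qed.

Lemma tree_dec (S T : tree) : {S = T} + {S <> T}.
Proof. apply excluded_middle_informative. Qed.

Lemma has_sum_ext (g1 g2 : tree -> C) (s : C) :
  (forall U, g1 U = g2 U) -> has_sum g1 s -> has_sum g2 s.
Proof.
  intros E H eps Heps. destruct (H eps Heps) as [L0 [HL0 P]].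
  exists L0; split; auto. intros L HL Hi. rewrite <- (sumC_ext L g1 g2 E). auto.
Qed.

Lemma has_sum_minus (g1 g2 : tree -> C) (s1 s2 : C) :
  has_sum g1 s1 -> has_sum g2 s2 -> has_sum (fun U => g1 U - g2 U)%C (s1 - s2)%C.
Proof.
  intros H1 H2 eps Heps.
  destruct (H1 (eps / 2)) as [L1 [[N1 F1] P1]]; [lra|].
  destruct (H2 (eps / 2)) as [L2 [[N2 F2] P2]]; [lra|].
  exists (nodup tree_dec (L1 ++ L2)). split.
  - split; [apply NoDup_nodup|]. apply Forall_forall. intros x Hx.
    apply nodup_In, in_app_or in Hx.
    destruct Hx; [eapply Forall_forall in F1 | eapply Forall_forall in F2]; eauto.
  - intros L HL Hincl. rewrite sumC_minus.
    assert (Hi1 : incl L1 L) by (intros x Hx; apply Hincl, nodup_In, in_or_app; auto).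
    assert (Hi2 : incl L2 L) by (intros x Hx; apply Hincl, nodup_In, in_or_app; auto).
    specialize (P1 L HL Hi1). specialize (P2 L HL Hi2).
    replace (sumC L g1 - sumC L g2 - (s1 - s2))%C
      with ((sumC L g1 - s1) - (sumC L g2 - s2))%C by ring.
    eapply Rle_lt_trans; [apply Cmod_minus_le | lra].
Qed.

Lemma has_sum_mult_r (g : tree -> C) (s k : C) :
  has_sum g s -> has_sum (fun U => g U * k)%C (s * k)%C.
Proof.
  intros H eps Heps. assert (Hk := Cmod_ge_0 k).
  destruct (H (eps / (Cmod k + 1))) as [L0 [HL0 P]].
  { apply Rdiv_lt_0_compat; lra. }
  exists L0; split; auto. intros L HL Hi. specialize (P L HL Hi).
  rewrite sumC_mult_r.
  replace (sumC L g * k - s * k)%C with ((sumC L g - s) * k)%C by ring.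
  rewrite Cmod_mult.
  apply Rle_lt_trans with (eps / (Cmod k + 1) * Cmod k).
  - apply Rmult_le_compat_r; lra.
  - apply Rmult_lt_reg_r with (Cmod k + 1); [lra|].
    field_simplify; [nra | lra].
Qed.

Lemma has_sum_Cmod_le (g : tree -> C) (s : C) (B : R) :
  has_sum g s -> (forall L, finset_P L -> sumR L (fun U => Cmod (g U)) <= B) ->
  Cmod s <= B.
Proof.
  intros H HB. apply Rnot_lt_le. intros Hlt.
  destruct (H (Cmod s - B)) as [L0 [HL0 P]]; [lra|].
  specialize (P L0 HL0 (incl_refl _)). specialize (HB L0 HL0).
  assert (Hs := Cmod_sumC L0 g).
  assert (Hm := Cmod_minus_le (sumC L0 g) (sumC L0 g - s)%C).
  replace (sumC L0 g - (sumC L0 g - s))%C with s in Hm by ring. lra.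
Qed.

Definition punctured (a : C) (P : C -> Prop) : Prop :=
  exists delta, 0 < delta /\ forall y, y <> a -> Cmod (y - a)%C < delta -> P y.

Lemma punctured_proper (a : C) : ProperFilter (punctured a).
Proof.
  split.
  - intros P [delta [Hdelta HP]]. exists (a + RtoC (delta / 2))%C.
    assert (Hd : Cmod (a + RtoC (delta / 2) - a)%C = delta / 2).
    { replace (a + RtoC (delta / 2) - a)%C with (RtoC (delta / 2)) by ring.
      rewrite Cmod_R; apply Rabs_pos_eq; lra. }
    apply HP; [intros E | lra].
    rewrite E in Hd. replace (a - a)%C with (RtoC 0) in Hd by ring.
    rewrite Cmod_0 in Hd; lra.
  - split.
    + exists 1; split; [lra | auto].
    + intros P Q [d1 [H1 HP]] [d2 [H2 HQ]]. exists (Rmin d1 d2). split.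
      * now apply Rmin_glb_lt.
      * intros y Hy Hd. split; [apply HP | apply HQ]; auto.
        -- eapply Rlt_le_trans; [exact Hd | apply Rmin_l].
        -- eapply Rlt_le_trans; [exact Hd | apply Rmin_r].
    + intros P Q HPQ [d [Hd HP]]. exists d; split; auto.
Qed.

#[local] Existing Instance punctured_proper.

Lemma punctured_cauchy_limit (q : C -> C) (a : C) (r K : R) :
  0 < r -> 0 <= K ->
  (forall y y', y <> a -> y' <> a -> Cmod (y - a)%C <= r -> Cmod (y' - a)%C <= r ->
     Cmod (q y - q y')%C <= K * (Cmod (y - a)%C + Cmod (y' - a)%C)) ->
  exists l, filterlim q (punctured a) (locally l).
Proof.
  intros Hr HK Hq.
  apply (filterlim_locally_cauchy
           (U := CompleteNormedModule.CompleteSpace _ C_CompleteNormedModule)).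
  intros eps. assert (Heps := cond_pos eps).
  set (delta := Rmin r (eps / (2 * K + 1))).
  assert (Hdelta : 0 < delta) by (apply Rmin_glb_lt; [lra | apply Rdiv_lt_0_compat; lra]).
  assert (Hdr : delta <= r) by apply Rmin_l.
  assert (Hde : 2 * K * delta < eps).
  { apply Rle_lt_trans with (2 * K * (eps / (2 * K + 1))).
    - apply Rmult_le_compat_l; [lra | apply Rmin_r].
    - apply Rmult_lt_reg_r with (2 * K + 1); [lra|].
      field_simplify; [nra | lra]. }
  exists (fun y => y <> a /\ Cmod (y - a)%C < delta). split.
  { exists delta. auto. }
  intros u v [Hu Hu'] [Hv Hv']. apply (@norm_compat1 C_AbsRing C_NormedModule).
  change (Cmod (q v - q u)%C < eps).
  eapply Rle_lt_trans; [apply Hq; auto; lra|]. nra.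
Qed.

Lemma is_derive_of_quotient_limit (h : C -> C) (a l : C) :
  filterlim (fun y => (h y - h a) / (y - a))%C (punctured a) (locally l) ->
  @is_derive C_AbsRing C_NormedModule h a l.
Proof.
  intros Hlim. split; [apply is_linear_scal_l|].
  intros x Hx. apply (is_filter_lim_locally_unique (V := AbsRing_NormedModule C_AbsRing)) in Hx.
  subst x. intros eps.
  destruct (proj1 (filterlim_locally_ball_norm (U := C_NormedModule) _ l) Hlim eps)
    as [delta [Hdelta Hq]].
  assert (Hnear : forall y : C, Cmod (y - a)%C < delta ->
            Cmod (h y - h a - (y - a) * l)%C <= eps * Cmod (y - a)%C).
  { intros y Hy. destruct (classic (y = a)) as [-> | Hya].
    - replace (h a - h a - (a - a) * l)%C with (RtoC 0) by ring.
      rewrite Cmod_0. apply Rmult_le_pos; [apply Rlt_le, cond_pos | apply Cmod_ge_0].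
    - assert (Hza : (y - a)%C <> RtoC 0).
      { intros E. apply Hya. replace y with ((y - a) + a)%C by ring. rewrite E. ring. }
      assert (Hqy : Cmod ((h y - h a) / (y - a) - l)%C < eps) by exact (Hq y Hya Hy).
      replace (h y - h a - (y - a) * l)%C with ((y - a) * ((h y - h a) / (y - a) - l))%C
        by (field; exact Hza).
      rewrite Cmod_mult, Rmult_comm.
      apply Rmult_le_compat_r; [apply Cmod_ge_0 | lra]. }
  apply (locally_norm_le_locally (V := AbsRing_NormedModule C_AbsRing)).
  exists (mkposreal delta Hdelta). intros y Hy. exact (Hnear y Hy).
Qed.

Lemma Cmod_Cpow (z : C) (k : nat) : Cmod (Cpow z k) = Cmod z ^ k.
Proof. induction k; simpl; [apply Cmod_1 | rewrite Cmod_mult, IHk; reflexivity]. Qed.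

Lemma Cpow_minus_le (z w : C) (r : R) (m : nat) :
  Cmod z <= r -> Cmod w <= r ->
  Cmod (Cpow z (S m) - Cpow w (S m))%C <= (Cmod z + Cmod w) * r ^ m.
Proof.
  intros Hz Hw. eapply Rle_trans; [apply Cmod_minus_le|].
  rewrite !Cmod_Cpow. simpl.
  assert (Hz0 := Cmod_ge_0 z). assert (Hw0 := Cmod_ge_0 w).
  assert (Cmod z ^ m <= r ^ m) by (apply pow_incr; lra).
  assert (Cmod w ^ m <= r ^ m) by (apply pow_incr; lra).
  nra.
Qed.

(* Terms with [n U = 0] are constant in [z] and cancel in the difference quotient. *)
Definition quotient_term (c : tree -> C) (n : tree -> nat) (z : C) (U : tree) : C :=
  match n U with O => RtoC 0 | S m => (c U * Cpow z m)%C end.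

Lemma has_sum_quotient (c : tree -> C) (n : tree -> nat) (z s s0 : C) :
  z <> RtoC 0 ->
  has_sum (fun U => c U * Cpow z (n U))%C s ->
  has_sum (fun U => c U * Cpow (RtoC 0) (n U))%C s0 ->
  has_sum (quotient_term c n z) ((s - s0) / z)%C.
Proof.
  intros Hz Hs Hs0.
  apply has_sum_ext with (2 := has_sum_mult_r _ _ (/ z)%C (has_sum_minus _ _ _ _ Hs Hs0)).
  intros U. unfold quotient_term. destruct (n U); simpl; field; exact Hz.
Qed.

Lemma quotient_term_lipschitz (c : tree -> C) (n : tree -> nat) (r : R) (z w : C) (U : tree) :
  0 < r -> Cmod z <= r -> Cmod w <= r ->
  Cmod (quotient_term c n z U - quotient_term c n w U)%C
    <= (Cmod z + Cmod w) / r ^ 2 * (Cmod (c U) * r ^ n U).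
Proof.
  intros Hr Hz Hw.
  assert (Hnn : 0 <= (Cmod z + Cmod w) / r ^ 2 * (Cmod (c U) * r ^ n U)).
  { assert (Hz0 := Cmod_ge_0 z). assert (Hw0 := Cmod_ge_0 w).
    apply Rmult_le_pos; [apply Rdiv_le_0_compat | apply Rmult_le_pos];
      try apply pow_lt; try apply pow_le; try apply Cmod_ge_0; lra. }
  unfold quotient_term. destruct (n U) as [|[|m]].
  - replace (RtoC 0 - RtoC 0)%C with (RtoC 0) by ring. rewrite Cmod_0. exact Hnn.
  - replace (c U * Cpow z 0 - c U * Cpow w 0)%C with (RtoC 0) by (simpl; ring).
    rewrite Cmod_0. exact Hnn.
  - replace (c U * Cpow z (S m) - c U * Cpow w (S m))%C
      with (c U * (Cpow z (S m) - Cpow w (S m)))%C by ring.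
    rewrite Cmod_mult.
    apply Rle_trans with (Cmod (c U) * ((Cmod z + Cmod w) * r ^ m)).
    + apply Rmult_le_compat_l; [apply Cmod_ge_0 | apply Cpow_minus_le; assumption].
    + right. simpl. field. lra.
Qed.

Lemma ex_derive_tree_series (c : tree -> C) (n : tree -> nat) (r M : R) (h : C -> C) (a : C) :
  0 < r ->
  (forall L, finset_P L -> sumR L (fun U => Cmod (c U) * r ^ n U) <= M) ->
  (forall b, Cmod (b - a)%C <= r -> has_sum (fun U => c U * Cpow (b - a) (n U))%C (h b)) ->
  @ex_derive C_AbsRing C_NormedModule h a.
Proof.
  intros Hr HM Hh.
  set (q := fun y => ((h y - h a) / (y - a))%C).
  assert (Hq : forall y, y <> a -> Cmod (y - a)%C <= r ->
            has_sum (quotient_term c n (y - a)) (q y)).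
  { intros y Hya Hy. apply has_sum_quotient; [|now apply Hh|].
    - intros E. apply Hya. replace y with ((y - a) + a)%C by ring. rewrite E. ring.
    - replace (RtoC 0) with (a - a)%C by ring. apply Hh.
      replace (a - a)%C with (RtoC 0) by ring. rewrite Cmod_0. lra. }
  assert (Hr2 : 0 < r ^ 2) by (apply pow_lt; lra).
  assert (HK : 0 <= M / r ^ 2) by (apply Rdiv_le_0_compat; [exact (sumR_bound_ge0 _ _ HM) | exact Hr2]).
  destruct (punctured_cauchy_limit q a r (M / r ^ 2) Hr HK) as [l Hl].
  - intros y y' Hy Hy' Hyr Hyr'.
    apply (has_sum_Cmod_le _ _ _ (has_sum_minus _ _ _ _ (Hq y Hy Hyr) (Hq y' Hy' Hyr'))).
    intros L HL.
    eapply Rle_trans.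
    { apply sumR_le. intros U.
      exact (quotient_term_lipschitz c n r (y - a) (y' - a) U Hr Hyr Hyr'). }
    rewrite sumR_scal.
    replace (M / r ^ 2 * (Cmod (y - a)%C + Cmod (y' - a)%C))
      with ((Cmod (y - a)%C + Cmod (y' - a)%C) / r ^ 2 * M) by (field; lra).
    apply Rmult_le_compat_l; [|now apply HM].
    apply Rdiv_le_0_compat; [|lra]. assert (H1 := Cmod_ge_0 (y - a)%C).
    assert (H2 := Cmod_ge_0 (y' - a)%C). lra.
  - exists l. now apply is_derive_of_quotient_limit.
Qed.

Lemma masks_length (n : nat) : length (masks n) = (2 ^ n)%nat.
Proof. induction n; simpl; auto. rewrite length_app, !length_map, IHn. lia. Qed.

Lemma ncontr_le (U T : tree) : INR (ncontr U T) <= 2 ^ deg U.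
Proof.
  unfold ncontr. eapply Rle_trans; [apply le_INR, filter_length_le|].
  rewrite masks_length, pow_INR. right. f_equal.
Qed.

Lemma rad_pos_summable (f : pseries) :
  Rbar_lt (Finite 0) (rad f) ->
  exists rho, 0 < rho /\ Rbar_le (Finite rho) (rad f) /\
    abs_summable (fun T => Cmod (f T) * rho ^ deg T).
Proof.
  unfold rad. intros H.
  destruct (Lub_Rbar_correct (fun rho => 0 <= rho /\
              abs_summable (fun T => Cmod (f T) * rho ^ deg T))) as [Hub Hlub].
  apply NNPP. intros Hn.
  assert (Hle : Rbar_le (Lub_Rbar (fun rho => 0 <= rho /\
                  abs_summable (fun T => Cmod (f T) * rho ^ deg T))) (Finite 0)).
  { apply Hlub. intros x [Hx0 Hx]. simpl. apply Rnot_lt_le. intros Hpos.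
    apply Hn. exists x. repeat split; auto. }
  destruct (Lub_Rbar _); simpl in *; lra.
Qed.

(* [n - k] is truncated: for [n < k] the left side is [r ^ k], hence [r <= 1]. *)
Lemma pow_sub_mult_le (r : R) (n k : nat) :
  0 <= r <= 1 -> r ^ (n - k) * r ^ k <= r ^ n.
Proof.
  intros Hr. destruct (Nat.le_gt_cases k n) as [Hkn | Hnk].
  - rewrite <- pow_add, Nat.sub_add by exact Hkn. lra.
  - replace (n - k)%nat with 0%nat by lia. rewrite Rmult_1_l.
    replace k with ((k - n) + n)%nat by lia. rewrite pow_add.
    assert (Hle1 : r ^ (k - n) <= 1) by (rewrite <- (pow1 (k - n)); apply pow_incr; lra).
    assert (0 <= r ^ n) by (apply pow_le; lra). nra.
Qed.

Lemma contraction_coef_bound (f : pseries) (U T : tree) (r : R) :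
  0 < r <= 1 ->
  Cmod (f U * RtoC (INR (ncontr U T)))%C * r ^ (deg U - deg T)
    <= / r ^ deg T * (Cmod (f U) * (2 * r) ^ deg U).
Proof.
  intros Hr.
  assert (HrT : 0 < r ^ deg T) by (apply pow_lt; lra).
  assert (Hsub : r ^ (deg U - deg T) <= / r ^ deg T * r ^ deg U).
  { apply Rmult_le_reg_r with (r ^ deg T); [exact HrT|].
    replace (/ r ^ deg T * r ^ deg U * r ^ deg T) with (r ^ deg U) by (field; lra).
    apply pow_sub_mult_le; lra. }
  rewrite Cmod_mult, Cmod_R, Rabs_pos_eq by apply pos_INR.
  rewrite Rpow_mult_distr.
  assert (Hf := Cmod_ge_0 (f U)). assert (Hn := pos_INR (ncontr U T)).
  assert (Hsub0 : 0 <= r ^ (deg U - deg T)) by (apply pow_le; lra).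
  assert (Hc := ncontr_le U T).
  apply Rle_trans with (Cmod (f U) * 2 ^ deg U * r ^ (deg U - deg T)).
  - apply Rmult_le_compat_r; [exact Hsub0|]. apply Rmult_le_compat_l; assumption.
  - assert (0 <= Cmod (f U) * 2 ^ deg U) by (apply Rmult_le_pos; [|apply pow_le]; lra).
    apply Rle_trans with (Cmod (f U) * 2 ^ deg U * (/ r ^ deg T * r ^ deg U)).
    + apply Rmult_le_compat_l; assumption.
    + right. ring.
Qed.

Theorem mainTheorem5 (D : C -> Prop) (F : C -> pseries) (T : tree) :
  region D -> planar_analytic D F -> isP T ->
  holomorphic_on D (fun a => F a T).
Proof.
  intros [_ [Hopen _]] [Hrad Hexp] HT a Da.
  destruct (Hopen a Da) as [rD HrD].
  destruct (rad_pos_summable (F a) (Hrad a Da)) as [rho [Hrho [Hrr [M HM]]]].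
  assert (HrD0 := cond_pos rD).
  (* [rho / 2] absorbs the bound [(U/T) <= 2 ^ deg U]. *)
  set (r := Rmin (Rmin (rho / 2) 1) (rD / 2)).
  assert (Hr0 : 0 < r) by (apply Rmin_glb_lt; [apply Rmin_glb_lt|]; lra).
  assert (Hrrho : r <= rho / 2) by (eapply Rle_trans; apply Rmin_l).
  assert (Hr1 : r <= 1) by (eapply Rle_trans; [apply Rmin_l | apply Rmin_r]).
  assert (HrrD : r <= rD / 2) by apply Rmin_r.
  apply (ex_derive_tree_series (fun U => F a U * RtoC (INR (ncontr U T)))%C
           (fun U => deg U - deg T)%nat r (/ r ^ deg T * M)); [exact Hr0 | |].
  - intros L HL. eapply Rle_trans.
    { apply sumR_le. intros U. apply contraction_coef_bound. lra. }
    rewrite sumR_scal. apply Rmult_le_compat_l; [apply Rlt_le, Rinv_0_lt_compat, pow_lt; lra|].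
    eapply Rle_trans; [|exact (HM L HL)]. apply sumR_le. intros U.
    rewrite Rabs_pos_eq by (apply Rmult_le_pos; [apply Cmod_ge_0 | apply pow_le; lra]).
    apply Rmult_le_compat_l; [apply Cmod_ge_0 | apply pow_incr; lra].
  - intros b Hb. apply Hexp; auto.
    + apply HrD, (norm_compat1 (K := C_AbsRing) (V := C_NormedModule)).
      change (Cmod (b - a)%C < rD). lra.
    + eapply Rbar_lt_le_trans; [|exact Hrr]. simpl. lra.
Qed.
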